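(* Let $k$ be a field, $k[x]$ a polynomial ring in one variable, $n\ge1$, $u_i,v_i\in k^*$, and let $p_1(x),\dots,p_n(x)\in k[x]\setminus\{0\}$ all have the same set of prime factors. Let $a_1,\dots,a_n,b_1,\dots,b_n$ be positive integers with $\gcd(a_i,b_1\cdots b_i)=1$ for each $i$, and define $$B_n=k[x][z_0,\dots,z_{n+1}]/\big(p_i(x)z_{i+1}+u_iz_i^{a_i}+v_iz_{i-1}^{b_i}\big)_{1\le i\le n},$$ where $z_0,\dots,z_{n+1}$ are indeterminates. If $p_i(x)\notin k$ and $a_i,b_i\ge2$ for all $i$, then the minimum number of generators of $B_n$ as a $k$-algebra is $n+3$. *)

From HB Require Import structures.
From mathcomp Require Import all_boot all_order all_algebra.
From mathcomp Require Import mpoly.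
Set Implicit Arguments. Unset Strict Implicit. Unset Printing Implicit Defensive.
Import GRing.Theory.
Local Open Scope ring_scope.

Definition in_ideal (R : comRingType) (m : nat) (r : 'I_m -> R) (f : R) :=
  exists c : 'I_m -> R, f = \sum_(i < m) c i * r i.

(* The quotient k-algebra {mpoly k[N]} / (r_1,...,r_m) is generated as a
   k-algebra by (at most) d elements: there are d elements g_1..g_d of the
   polynomial ring whose classes generate the quotient, i.e. every f is
   congruent modulo the ideal to a k-polynomial expression Q(g_1,...,g_d). *)
Definition quot_alg_generated_by (k : fieldType) (N m : nat)
    (r : 'I_m -> {mpoly k[N]}) (d : nat) :=
  exists g : 'I_d -> {mpoly k[N]},
    forall f : {mpoly k[N]}, exists Q : {mpoly k[d]},
      in_ideal r (f - mmap (@mpolyC N k) g Q).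

Definition quot_embdim_eq (k : fieldType) (N m : nat)
    (r : 'I_m -> {mpoly k[N]}) (d : nat) :=
  quot_alg_generated_by r d /\
  forall d', quot_alg_generated_by r d' -> (d <= d')%N.

(* Polynomial ring k[x][z_0,...,z_{n+1}] = {mpoly k[n+3]}:
   variable 0 is x, variable j+1 is z_j. *)
Definition varx (n : nat) : 'I_(n.+3) := ord0.
Definition varz (n j : nat) : 'I_(n.+3) := inord j.+1.

Definition liftx (k : fieldType) (n : nat) (p : {poly k}) : {mpoly k[n.+3]} :=
  (map_poly (@mpolyC n.+3 k) p).['X_(varx n)].

(* The n relations p_i(x) z_{i+1} + u_i z_i^{a_i} + v_i z_{i-1}^{b_i},
   i = 1..n (the ordinal i : 'I_n stands for index i+1). *)
Definition Brel (k : fieldType) (n : nat) (p : nat -> {poly k}) (u v : nat -> k)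
    (a b : nat -> nat) (i : 'I_n) : {mpoly k[n.+3]} :=
  let j := i.+1 in
  liftx n (p j) * 'X_(varz n j.+1)
  + u j *: 'X_(varz n j) ^+ a j
  + v j *: 'X_(varz n j.-1) ^+ b j.

Definition same_prime_factors (k : fieldType) (p q : {poly k}) :=
  forall f : {poly k}, irreducible_poly f -> (f %| p) = (f %| q).

(* The lower bound n + 3 is the dimension of a Zariski tangent space.  Choose
   a root z of an irreducible factor of p_1 in a finite extension L of k; it
   is a root of every p_i, and since a_i, b_i >= 2 every relation vanishes to
   order two at the point x = z, z_0 = ... = z_{n+1} = 0, so every directional
   derivative at that point kills the ideal of relations.  Fewer than n + 3
   generators g_j would admit a nonzero tangent vector c killing all of them,
   hence every polynomial expression Q(g); applying c to z_e = Q(g) modulo the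
   ideal then gives c_e = 0 for every e. *)
From HB Require Import structures.
From mathcomp Require Import all_boot all_order all_algebra all_field.
From mathcomp Require Import mpoly ring.
From Stdlib Require Import Classical.
Set Implicit Arguments. Unset Strict Implicit. Unset Printing Implicit Defensive.
Import GRing.Theory.
Local Open Scope ring_scope.

Lemma exists_irreducible_factor (k : fieldType) (p : {poly k}) :
  (1 < size p)%N -> exists2 r, irreducible_poly r & r %| p.
Proof.
have [d] := ubnP (size p); elim: d p => // d IHd p lt_pd p_gt1.
apply: NNPP => no_factor; apply: (no_factor); exists p => //.
split=> // q q_neq1 q_dvd_p.
have p_neq0 : p != 0 by rewrite -size_poly_gt0 ltnW.
rewrite -dvdp_size_eqp // eqn_leq dvdp_leq //= leqNgt; apply/negP => lt_qp.
have q_gt1 : (1 < size q)%N.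
  by rewrite ltn_neqAle eq_sym q_neq1 size_poly_gt0 (dvdpN0 q_dvd_p).
have [r irr_r r_dvd_q] := IHd q (leq_trans lt_qp lt_pd) q_gt1.
by apply: no_factor; exists r => //; apply: dvdp_trans q_dvd_p.
Qed.

Lemma nontrivial_left_kernel (F : fieldType) m n (A : 'M[F]_(m, n)) :
  (n < m)%N -> exists2 c : 'rV_m, c *m A = 0 & c != 0.
Proof.
move=> lt_nm; have /rowV0Pn[c /sub_kermxP cA0 c_neq0] : kermx A != 0.
  by rewrite kermx_eq0 /row_free ltn_eqF // (leq_ltn_trans (rank_leq_col A)).
by exists c.
Qed.

Lemma quot_alg_generated_by_vars (k : fieldType) N m (r : 'I_m -> {mpoly k[N]}) :
  quot_alg_generated_by r N.
Proof.
exists (fun i => 'X_i) => F; exists F.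
have -> : mmap (@mpolyC N k) (fun i => 'X_i) F = F.
  rewrite [RHS]mpolyE; apply: eq_bigr => mu _.
  by rewrite mmap1_id mul_mpolyC.
by exists (fun=> 0); rewrite subrr big1 // => i _; rewrite mul0r.
Qed.

Section TangentVectors.
Variables (k L : fieldType) (iota : {rmorphism k -> L}) (N : nat) (pt : 'I_N -> L).
Local Notation ev := (mmap iota pt).

Definition mderiv_at (c : 'rV[L]_N) (F : {mpoly k[N]}) : L :=
  \sum_(e < N) c 0 e * ev F^`M(e).

Lemma mderiv_at_is_zmod_morphism c : zmod_morphism (mderiv_at c).
Proof.
move=> F G; rewrite /mderiv_at -sumrB; apply: eq_bigr => e _.
by rewrite mderivB mmapB mulrBr.
Qed.

HB.instance Definition _ c := GRing.isZmodMorphism.Build _ _ (mderiv_at c)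
  (mderiv_at_is_zmod_morphism c).

Lemma mderiv_atM c F G :
  mderiv_at c (F * G) = ev F * mderiv_at c G + ev G * mderiv_at c F.
Proof.
rewrite /mderiv_at 2![in RHS]mulr_sumr -big_split; apply: eq_bigr => e _ /=.
by rewrite mderivM mmapD !rmorphM; ring.
Qed.

Lemma mderiv_atC c a : mderiv_at c a%:MP = 0.
Proof. by rewrite /mderiv_at big1 // => e _; rewrite mderivC mmap0 mulr0. Qed.

Lemma mderiv_atX c i : mderiv_at c 'X_i = c 0 i.
Proof.
rewrite /mderiv_at (bigD1 i) //= big1 => [|e ne_ei]; last first.
  by rewrite mderivX mnm1E eq_sym (negbTE ne_ei) scale0r mmap0 mulr0.
rewrite mderivX mnm1E eqxx addr0.
have -> : (U_(i) - U_(i))%MM = 0%MM by apply/mnmP => j; rewrite !mnmE subnn.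
by rewrite mpolyX0 scale1r rmorph1 mulr1.
Qed.

Lemma mderiv_at_mmap c d (g : 'I_d -> {mpoly k[N]}) (Q : {mpoly k[d]}) :
  (forall j, mderiv_at c (g j) = 0) -> mderiv_at c (mmap (@mpolyC N k) g Q) = 0.
Proof.
have mderiv_at_prod (I : Type) (s : seq I) (P : pred I) (G : I -> {mpoly k[N]}) :
    (forall i, P i -> mderiv_at c (G i) = 0) ->
    mderiv_at c (\prod_(i <- s | P i) G i) = 0.
  move=> G0; apply: (big_ind (fun F => mderiv_at c F = 0)) => [||i /G0] //.
    by rewrite -mpolyC1 mderiv_atC.
  by move=> F1 F2 F1_0 F2_0; rewrite mderiv_atM F1_0 F2_0 !mulr0 addr0.
move=> g0; rewrite raddf_sum big1 // => mu _ /=.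
rewrite mderiv_atM mderiv_atC mulr0 addr0 mderiv_at_prod ?mulr0 // => i _.
by rewrite -[mu i]subn0 -prodr_const_nat mderiv_at_prod.
Qed.

Definition vanishes_to_order2 (F : {mpoly k[N]}) :=
  ev F = 0 /\ forall c, mderiv_at c F = 0.

Lemma vanishes_to_order2D F G :
  vanishes_to_order2 F -> vanishes_to_order2 G -> vanishes_to_order2 (F + G).
Proof.
move=> [F0 dF0] [G0 dG0]; split=> [|c]; first by rewrite mmapD F0 G0 addr0.
by rewrite raddfD /= dF0 dG0 addr0.
Qed.

Lemma vanishes_to_order2_mull F G :
  vanishes_to_order2 F -> vanishes_to_order2 (G * F).
Proof.
move=> [F0 dF0]; split=> [|c]; first by rewrite rmorphM /= F0 mulr0.
by rewrite mderiv_atM F0 dF0 mulr0 mul0r addr0.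
Qed.

Lemma vanishes_to_order2Z a F :
  vanishes_to_order2 F -> vanishes_to_order2 (a *: F).
Proof. by rewrite -mul_mpolyC; apply: vanishes_to_order2_mull. Qed.

Lemma vanishes_to_order2M F G :
  ev F = 0 -> ev G = 0 -> vanishes_to_order2 (F * G).
Proof.
move=> F0 G0; split=> [|c]; first by rewrite rmorphM /= F0 mul0r.
by rewrite mderiv_atM F0 G0 !mul0r addr0.
Qed.

Lemma vanishes_to_order2X F m :
  ev F = 0 -> (2 <= m)%N -> vanishes_to_order2 (F ^+ m).
Proof.
case: m => // m F0 m_gt0; rewrite exprS; apply: vanishes_to_order2M => //.
by rewrite rmorphXn /= F0 expr0n; case: m m_gt0.
Qed.

Lemma in_ideal_vanishes_to_order2 m (r : 'I_m -> {mpoly k[N]}) F :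
  (forall i, vanishes_to_order2 (r i)) -> in_ideal r F -> vanishes_to_order2 F.
Proof.
move=> r_van [cf ->]; apply: big_ind => [||i _]; last exact: vanishes_to_order2_mull.
  by split=> [|c]; rewrite raddf0.
exact: vanishes_to_order2D.
Qed.

Lemma quot_alg_generated_by_ge m (r : 'I_m -> {mpoly k[N]}) d :
  (forall i, vanishes_to_order2 (r i)) -> quot_alg_generated_by r d -> (N <= d)%N.
Proof.
move=> r_van [g gen]; rewrite leqNgt; apply/negP => lt_dN.
pose jacobian : 'M[L]_(N, d) := \matrix_(e, j) ev (g j)^`M(e).
have [c c_ker /negP] := nontrivial_left_kernel jacobian lt_dN; apply.
apply/eqP/rowP => e; rewrite mxE.
have [Q /(in_ideal_vanishes_to_order2 r_van) [_ /(_ c)]] := gen 'X_e.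
rewrite raddfB /= mderiv_atX mderiv_at_mmap ?subr0 // => j.
have := congr1 (fun M : 'rV_d => M 0 j) c_ker; rewrite !mxE => <-.
by apply: eq_bigr => e' _; rewrite mxE.
Qed.

End TangentVectors.

Section SingularPoint.
Variables (k : fieldType) (n : nat) (p : nat -> {poly k}) (u v : nat -> k).
Variables (a b : nat -> nat) (L : fieldType) (iota : {rmorphism k -> L}) (z : L).
Hypothesis p_root : forall i, (1 <= i <= n)%N -> root (map_poly iota (p i)) z.
Hypothesis ab_ge2 : forall i, (1 <= i <= n)%N -> (2 <= a i)%N /\ (2 <= b i)%N.

Definition singular_point (e : 'I_n.+3) : L := if e == varx n then z else 0.
Local Notation ev := (mmap iota singular_point).

Lemma ev_varz j : (j <= n.+1)%N -> ev 'X_(varz n j) = 0.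
Proof.
move=> le_jn; rewrite mmapX mmap1U /singular_point.
by rewrite -val_eqE /= inordK.
Qed.

Lemma ev_liftx P : ev (liftx n P) = (map_poly iota P).[z].
Proof.
rewrite /liftx -horner_map /= mmapX mmap1U /singular_point eqxx.
by rewrite -map_poly_comp; congr _.[_]; apply: eq_map_poly => c /=; rewrite mmapC.
Qed.

Lemma Brel_vanishes_to_order2 i :
  vanishes_to_order2 iota singular_point (Brel p u v a b i).
Proof.
have i_range : (1 <= i.+1 <= n)%N by rewrite ltn_ord.
have [a_ge2 b_ge2] := ab_ge2 i_range.
have lt_in : (i < n)%N := ltn_ord i.
rewrite /Brel; apply: vanishes_to_order2D; first apply: vanishes_to_order2D.
- apply: vanishes_to_order2M; first by rewrite ev_liftx; apply/rootP/p_root.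
  by rewrite ev_varz.
- by apply/vanishes_to_order2Z/vanishes_to_order2X; rewrite // ev_varz // ltnW.
- by apply/vanishes_to_order2Z/vanishes_to_order2X; rewrite // ev_varz // ltnW // ltnW.
Qed.

End SingularPoint.

Theorem proposition4p3 (k : fieldType) (n : nat) (p : nat -> {poly k})
    (u v : nat -> k) (a b : nat -> nat) :
  (1 <= n)%N ->
  (forall i, (1 <= i <= n)%N -> u i != 0) ->
  (forall i, (1 <= i <= n)%N -> v i != 0) ->
  (forall i, (1 <= i <= n)%N -> p i != 0) ->
  (forall i j, (1 <= i <= n)%N -> (1 <= j <= n)%N ->
     same_prime_factors (p i) (p j)) ->
  (forall i, (1 <= i <= n)%N -> (0 < a i)%N /\ (0 < b i)%N) ->
  (forall i, (1 <= i <= n)%N -> coprime (a i) (\prod_(1 <= j < i.+1) b j)) ->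
  (forall i, (1 <= i <= n)%N -> (1 < size (p i))%N) ->
  (forall i, (1 <= i <= n)%N -> (2 <= a i)%N /\ (2 <= b i)%N) ->
  quot_embdim_eq (@Brel k n p u v a b) (n + 3).
Proof.
(* The upper bound holds for every quotient. *)
move=> n_gt0 _ _ _ same_p _ _ p_nonconst ab_ge2.
have one_le_n : (1 <= 1 <= n)%N by rewrite n_gt0.
have [r irr_r r_dvd_p1] := exists_irreducible_factor (p_nonconst 1%N one_le_n).
have [L _ [z rz0 _]] := irredp_FAdjoin irr_r.
have p_root i : (1 <= i <= n)%N -> root (map_poly (in_alg L) (p i)) z.
  move=> i_range; apply: root_dvdp rz0.
  by rewrite dvdp_map -(same_p 1%N i one_le_n i_range r irr_r).
rewrite addn3; split=> [|d]; first exact: quot_alg_generated_by_vars.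
apply: (quot_alg_generated_by_ge (iota := in_alg L) (pt := @singular_point n _ z)).
by move=> i; apply: Brel_vanishes_to_order2.
Qed.
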